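(* Let $n\ge1$ and let $A=A[1]\cdots A[n]$ be a sequence of $n$ elements. Let $\#_1,\ldots,\#_n$ be pairwise distinct symbols, each different from every $A[j]$, and let $T=A\,\#_1\#_2\cdots\#_n$, a string of length $2n$. Then $S_T(k)/k\le n$ for all $k\ge2$, and $\delta(T)=S_T(1)=n+|\{A[1],\ldots,A[n]\}|$. In particular, the elements of $A$ are pairwise distinct if and only if $\delta(T)=2n$; equivalently, $A$ has a repeated element if and only if $\delta(T)<2n$.
   Context: For a string $T$, $S_T(k)$ is the number of distinct length-$k$ substrings of $T$, and $\delta(T)=\sup\{S_T(k)/k: k\ge1\}$. *)

From mathcomp Require Import all_boot all_order all_algebra.
From mathcomp Require Import all_classical all_reals.
Set Implicit Arguments. Unset Strict Implicit. Unset Printing Implicit Defensive.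
Import Order.TTheory GRing.Theory Num.Theory.

Definition factors (S : eqType) (T : seq S) (k : nat) : seq (seq S) :=
  [seq take k (drop i T) | i <- iota 0 ((size T).+1 - k)].

Definition substr_count (S : eqType) (T : seq S) (k : nat) : nat :=
  size (undup (factors T k)).

Local Open Scope classical_set_scope.
Local Open Scope ring_scope.

Definition delta (R : realType) (S : eqType) (T : seq S) : R :=
  sup [set ((substr_count T k)%:R / k%:R : R) | k in [set k : nat | (1 <= k)%N]].

From mathcomp Require Import all_boot all_order all_algebra.
From mathcomp Require Import all_classical all_reals.
Import Order.TTheory GRing.Theory Num.Theory.
Local Open Scope classical_set_scope.
Local Open Scope ring_scope.

(* Write T = A ++ H with |A| = |H| = n, H duplicate-free and
   disjoint from A.
   - Length-1 factors are the letters of a string, so S_T(1) counts its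
     distinct letters; by disjointness this is |H| + |undup A| = n + |undup A|.
   - A string of length m has at most m + 1 - k factors of length k; for
     m = 2n and k >= 2 this is at most n * k, so S_T(k)/k <= n <= S_T(1).
   - A supremum of ratios S_T(k)/k dominated by the k = 1 term equals it,
     hence delta(T) = S_T(1) = n + |undup A|.
   - Finally |undup A| = n exactly when A is duplicate-free and < n
     otherwise, which gives the two characterisations of delta(T) = 2n. *)

Lemma factors1 {S : eqType} (s : seq S) : factors s 1 = [seq [:: x] | x <- s].
Proof.
elim: s => [|x s IH] //.
move: IH; rewrite /factors /= !subn1 /= => IH.
rewrite take0 -IH -(addn0 1%N) iotaDl -map_comp; congr (_ :: _).
Qed.

Lemma substr_count1 {S : eqType} (s : seq S) :
  substr_count s 1 = size (undup s).
Proof.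
by rewrite /substr_count factors1 undup_map_inj ?size_map // => x y [].
Qed.

Lemma size_undup_cat_disjoint {S : eqType} (s t : seq S) :
  (forall x, x \in t -> x \notin s) ->
  size (undup (s ++ t)) = (size (undup s) + size (undup t))%N.
Proof.
move=> dis; rewrite undup_cat size_cat; congr (_ + _)%N.
congr size; apply/all_filterP/allP => x; rewrite mem_undup => xs.
by apply/negP => /dis; rewrite xs.
Qed.

Lemma substr_count_le {S : eqType} (s : seq S) (k : nat) :
  (substr_count s k <= (size s).+1 - k)%N.
Proof.
rewrite /substr_count; apply: leq_trans (size_undup _) _.
by rewrite /factors size_map size_iota.
Qed.

Lemma substr_count_le_half {S : eqType} (s : seq S) (n k : nat) :
  size s = (2 * n)%N -> (2 <= k)%N -> (substr_count s k <= n * k)%N.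
Proof.
move=> sz k2; apply: leq_trans (substr_count_le s k) _.
rewrite sz mul2n -addnn; case: k k2 => [|[|k]] // _.
rewrite subSS; apply: leq_trans (leq_subr _ _) _.
by rewrite mulnS mulnS addnA leq_addr.
Qed.

Lemma uniq_size_undup {S : eqType} (s : seq S) :
  uniq s = (size (undup s) == size s).
Proof. by rewrite eqn_leq size_undup leqNgt ltn_size_undup negbK. Qed.

Lemma delta_count1 (R : realType) {S : eqType} (s : seq S) :
  (forall k, (2 <= k)%N -> (substr_count s k)%:R / k%:R <= ((substr_count s 1)%:R : R)) ->
  delta R s = (substr_count s 1)%:R.
Proof.
move=> hk; rewrite /delta.
set c := ((substr_count s 1)%:R : R).
set E := [set ((substr_count s k)%:R / k%:R : R) | k in [set k : nat | (1 <= k)%N]].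
have Ec : E c by exists 1%N; rewrite // divr1.
have ubc : ubound E c.
  by move=> _ [[|[|k]] // _ <-]; [rewrite divr1 | apply: hk].
apply/eqP; rewrite eq_le; apply/andP; split; first by apply: ge_sup; [exists c|].
by apply: sup_upper_bound => //; split; exists c.
Qed.

Theorem mainTheorem4 (R : realType) (S : eqType) (n : nat) (A H : seq S) :
  (1 <= n)%N -> size A = n -> size H = n -> uniq H ->
  (forall h, h \in H -> h \notin A) ->
  let T := A ++ H in
  (forall k : nat, (2 <= k)%N -> (substr_count T k)%:R / k%:R <= (n%:R : R)) /\
  delta R T = (substr_count T 1)%:R /\
  substr_count T 1 = (n + size (undup A))%N /\
  (uniq A <-> delta R T = (2 * n)%:R) /\
  (~~ uniq A <-> delta R T < (2 * n)%:R).
Proof.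
move=> _ sA sH uH dis T.
have count1 : substr_count T 1 = (n + size (undup A))%N.
  by rewrite substr_count1 size_undup_cat_disjoint // (undup_id uH) sH addnC.
have ratio_le (k : nat) : (2 <= k)%N -> (substr_count T k)%:R / k%:R <= (n%:R : R).
  move=> k_ge2; have k_pos : (0 : R) < k%:R by rewrite ltr0n (leq_trans _ k_ge2).
  rewrite ler_pdivrMr // -natrM ler_nat substr_count_le_half //.
  by rewrite size_cat sA sH mul2n addnn.
have delta_eq : delta R T = (substr_count T 1)%:R.
  apply: delta_count1 => k k_ge2; apply: le_trans (ratio_le k k_ge2) _.
  by rewrite count1 ler_nat leq_addr.
split; first exact: ratio_le.
rewrite delta_eq count1 mul2n -addnn ltr_nat ltn_add2l -sA ltn_size_undup uniq_size_undup.
do 3 split => //; split => [/eqP -> // | /eqP].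
by rewrite eqr_nat eqn_add2l.
Qed.
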